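(* Let $S$ be an entropy function for a finite set $X$ and $X'\subset X$. Then the function $S'$ on $2^{X'}$ defined by \[ S'(A):=\min_{\hat A\subseteq X\setminus X'}S(A\cup\hat A)\qquad(A\subseteq X')\] is an entropy function for $X'$.
   Context: An entropy function for a finite set $X$ is a function $S:2^X\to[0,\infty)$ with $S(\emptyset)=0$, $S(A)+S(B)\ge S(A\cap B)+S(A\cup B)$ and $S(A)+S(B)\ge S(A\setminus B)+S(B\setminus A)$ for all $A,B\subseteq X$. *)

From mathcomp Require Import all_boot all_order all_algebra.
Set Implicit Arguments. Unset Strict Implicit. Unset Printing Implicit Defensive.
Import Order.TTheory GRing.Theory Num.Theory.
Local Open Scope ring_scope.

(* An entropy function for the finite set X (a subset of the finite type T):
   a function S on subsets of X (represented as a function on {set T}, only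
   its values on subsets of X matter) with S(empty) = 0, values in [0,oo),
   submodularity and the "difference" inequality for all A, B subsets of X. *)
Definition entropy_function (R : realFieldType) (T : finType) (X : {set T})
    (S : {set T} -> R) : Prop :=
  [/\ S set0 = 0,
      forall A : {set T}, A \subset X -> 0 <= S A,
      forall A B : {set T}, A \subset X -> B \subset X ->
        S (A :&: B) + S (A :|: B) <= S A + S B
    & forall A B : {set T}, A \subset X -> B \subset X ->
        S (A :\: B) + S (B :\: A) <= S A + S B].

(* S'(A) = min over Ahat subset of X \ X' of S(A cup Ahat), with X = [set: T].
   The seed S A is harmless: Ahat = set0 is among the indices. *)
Definition restrict_min (R : realFieldType) (T : finType) (X' : {set T})
    (S : {set T} -> R) (A : {set T}) : R :=
  \big[Order.min/S A]_(Ahat in powerset (~: X')) S (A :|: Ahat).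

From mathcomp Require Import all_boot all_order all_algebra.
Import Order.TTheory GRing.Theory Num.Theory.
Set Implicit Arguments. Unset Strict Implicit.
Local Open Scope ring_scope.

(* The minimum is attained, so choose minimisers a, b outside X' for A, B
   inside X'.  As X' separates A, B from a, b, the sets
   (A :|: a) :&: (B :|: b), (A :|: a) :|: (B :|: b) and (A :|: a) :\: (B :|: b)
   are A :&: B, A :|: B and A :\: B each enlarged by a set outside X', hence
   admissible in the minima defining S' at those sets; the inequality for S at
   A :|: a and B :|: b thus transfers to S'. *)

Lemma setIU_disjoint (T : finType) (A B a b : {set T}) :
  [disjoint A & b] -> [disjoint B & a] ->
  (A :|: a) :&: (B :|: b) = (A :&: B) :|: (a :&: b).
Proof.
move=> Ab Ba; rewrite setIUl !setIUr (setIC a B).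
by rewrite (disjoint_setI0 Ab) (disjoint_setI0 Ba) setU0 set0U.
Qed.

Lemma setDU_disjoint (T : finType) (A B a b : {set T}) :
  [disjoint A & b] -> [disjoint B & a] ->
  (A :|: a) :\: (B :|: b) = (A :\: B) :|: (a :\: b).
Proof.
move=> /setDidPl AbE; rewrite disjoint_sym => /setDidPl aBE.
rewrite setDUl !setDUr AbE aBE.
by rewrite (setIidPl (subsetDl _ _)) (setIidPr (subsetDl _ _)).
Qed.

Lemma disjoint_subset_setC (T : finType) (X' A b : {set T}) :
  A \subset X' -> b \subset ~: X' -> [disjoint A & b].
Proof.
by move=> AX' bX'; rewrite (disjointWl AX') // disjoint_sym disjoints_subset.
Qed.

Section RestrictMin.

Variables (R : realFieldType) (T : finType) (X' : {set T}) (S : {set T} -> R).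

Local Notation S' := (restrict_min X' S).

Lemma restrict_min_le (A a : {set T}) : a \subset ~: X' -> S' A <= S (A :|: a).
Proof. by move=> aX'; apply: bigmin_le_cond; rewrite inE. Qed.

Lemma restrict_minP (A : {set T}) :
  exists2 a : {set T}, a \subset ~: X' & S' A = S (A :|: a).
Proof.
rewrite /restrict_min.
apply: (big_ind (fun v => exists2 a : {set T}, a \subset ~: X' & v = S (A :|: a))).
- by exists set0; rewrite ?sub0set ?setU0.
- by move=> _ _ [a aX' ->] [b bX' ->]; rewrite minEle; case: ifP; [exists a|exists b].
- by move=> a; rewrite inE => aX'; exists a.
Qed.

Lemma restrict_min_ge0 (A : {set T}) : (forall B, 0 <= S B) -> 0 <= S' A.
Proof. by move=> S_ge0; have [a _ ->] := restrict_minP A. Qed.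

Lemma restrict_min_set0 : S set0 = 0 -> (forall B, 0 <= S B) -> S' set0 = 0.
Proof.
move=> S0 S_ge0; apply/eqP; rewrite eq_le restrict_min_ge0 // andbT.
by rewrite -S0 -[X in S X](setU0 set0) restrict_min_le ?sub0set.
Qed.

Variables (A B : {set T}).
Hypotheses (AX' : A \subset X') (BX' : B \subset X').

Lemma restrict_min_submod :
  (forall C D, S (C :&: D) + S (C :|: D) <= S C + S D) ->
  S' (A :&: B) + S' (A :|: B) <= S' A + S' B.
Proof.
move=> S_submod; have [a aX' ->] := restrict_minP A.
have [b bX' ->] := restrict_minP B.
apply: le_trans (S_submod _ _).
have Ab := disjoint_subset_setC AX' bX'; have Ba := disjoint_subset_setC BX' aX'.
rewrite setIU_disjoint // setUACA.
apply: lerD; apply: restrict_min_le; last by rewrite subUset aX' bX'.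
exact: subset_trans (subsetIl _ _) aX'.
Qed.

Lemma restrict_min_diff :
  (forall C D, S (C :\: D) + S (D :\: C) <= S C + S D) ->
  S' (A :\: B) + S' (B :\: A) <= S' A + S' B.
Proof.
move=> S_diff; have [a aX' ->] := restrict_minP A.
have [b bX' ->] := restrict_minP B.
apply: le_trans (S_diff _ _).
have Ab := disjoint_subset_setC AX' bX'; have Ba := disjoint_subset_setC BX' aX'.
rewrite !setDU_disjoint //.
by apply: lerD; apply: restrict_min_le; apply: subset_trans (subsetDl _ _) _.
Qed.

End RestrictMin.

Theorem proposition26 (R : realFieldType) (T : finType)
    (S : {set T} -> R) (X' : {set T}) :
  entropy_function [set: T] S ->
  entropy_function X' (restrict_min X' S).
Proof.
case=> S0 S_ge0 S_submod S_diff.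
have S_ge0' B : 0 <= S B by apply: S_ge0; apply: subsetT.
split.
- exact: restrict_min_set0.
- by move=> A _; apply: restrict_min_ge0.
- by move=> A B AX' BX'; apply: restrict_min_submod => // C D; apply: S_submod.
- by move=> A B AX' BX'; apply: restrict_min_diff => // C D; apply: S_diff.
Qed.
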